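(* The graph $K_{15}-6K_2$ has a triangular embedding in an orientable surface; in particular its orientable genus equals $10$.
   Context: $K_{15}-6K_2$ is the complete graph on 15 vertices with the 6 edges of a matching removed. An embedding is triangular if it is cellular and every face is bounded by a closed walk of length 3. *)

(* Combinatorial (rotation-system) description of
   orientable cellular graph embeddings (Heffter-Edmonds). *)
From HB Require Import structures.
From mathcomp Require Import all_boot fingroup perm.
Set Implicit Arguments. Unset Strict Implicit. Unset Printing Implicit Defensive.

Section Embeddings.
Variables (T : finType) (adj : rel T).

Definition dart := {x : T * T | adj x.1 x.2}.

Definition tail (d : dart) : T := (val d).1.
Definition head (d : dart) : T := (val d).2.

(* reversal of a dart (the graph is assumed symmetric; the default is never used) *)
Definition drev (d : dart) : dart :=
  odflt d (insub ((val d).2, (val d).1) : option dart).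

Definition is_rotation (rho : {perm dart}) : Prop :=
  (forall d, tail (rho d) = tail d) /\
  (forall d d', tail d = tail d' -> fconnect rho d d').

Definition face_perm (rho : {perm dart}) (d : dart) : dart := rho (drev d).

Definition nfaces (rho : {perm dart}) : nat := fcard (face_perm rho) predT.

Definition nedges : nat := #|{: dart}| %/ 2.

(* Euler: 2 - 2 g = V - E + F  (graph connected, embedding cellular) *)
Definition emb_genus (rho : {perm dart}) : nat :=
  (2 + nedges - (#|T| + nfaces rho)) %/ 2.

Definition triangular (rho : {perm dart}) : Prop :=
  forall d, fingraph.order (face_perm rho) d = 3.

Definition orientable_genus_is (g : nat) : Prop :=
  (exists rho, is_rotation rho /\ emb_genus rho = g) /\
  (forall rho, is_rotation rho -> g <= emb_genus rho).

End Embeddings.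

(* K_15 - 6K_2 on vertex set 'I_15: remove the matching {0,1},{2,3},...,{10,11} *)
Definition matched (u v : 'I_15) : bool :=
  [&& (u < 12)%N, (v < 12)%N & u./2 == v./2].

Definition K15m6K2 : rel 'I_15 := fun u v => (u != v) && ~~ matched u v.

From mathcomp Require Import all_boot fingroup perm.
From mathcomp Require Import zify.
Set Implicit Arguments. Unset Strict Implicit. Unset Printing Implicit Defensive.

(* An explicit rotation system, checked by computation, traces only
   triangular faces: F = 2E/3 = 66, and Euler's formula gives genus
   (2 + E - V - F)/2 = (2 + 99 - 15 - 66)/2 = 10.  Conversely, in a simple
   graph of minimum degree at least 2 no face of a rotation system has length
   1 or 2, so 3F <= 2E for every embedding and no genus is smaller than 10. *)

Lemma fcard_mul_le (T : finType) (f : T -> T) k :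
  injective f -> (forall x, k <= fingraph.order f x) -> fcard f predT * k <= #|T|.
Proof.
move=> f_inj k_le_order; have f_sym := fconnect_sym f_inj.
have -> : fcard f predT = #|froots f| by apply: eq_card => x; rewrite !inE andbT.
rewrite -sum_nat_const -sum1_card [leqRHS](partition_big (froot f) (froots f)) => [|x _];
  last exact: roots_root.
apply: leq_sum => r /eqP root_r.
rewrite (eq_bigl (mem (fconnect f r))) ?sum1_card; first exact: k_le_order.
by move=> x; rewrite inE -root_r (root_connect f_sym) root_r f_sym.
Qed.

Lemma dart_eq (T : finType) (adj : rel T) (d d' : dart adj) :
  tail d = tail d' -> head d = head d' -> d = d'.
Proof.
move=> tail_eq head_eq; apply: val_inj.
by rewrite [val d]surjective_pairing [val d']surjective_pairing; exact: congr2 tail_eq head_eq.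
Qed.

Section Faces.
Variables (T : finType) (adj : rel T).
Hypotheses (adj_sym : symmetric adj) (adj_irrefl : irreflexive adj).
Implicit Types (rho : {perm dart adj}) (d : dart adj).

Lemma adj_dart d : adj (tail d) (head d).
Proof. exact: (valP d). Qed.

Lemma val_drev d : val (drev d) = (head d, tail d).
Proof. by rewrite /drev insubT //= adj_sym (valP d). Qed.

Lemma tail_drev d : tail (drev d) = head d.
Proof. by rewrite /tail val_drev. Qed.

Lemma head_drev d : head (drev d) = tail d.
Proof. by rewrite /head val_drev. Qed.

Lemma drevK : involutive (@drev _ adj).
Proof.
by move=> d; apply: val_inj; rewrite val_drev tail_drev head_drev -surjective_pairing.
Qed.

Lemma face_perm_inj rho : injective (face_perm rho).
Proof. by move=> d d' /perm_inj/(can_inj drevK). Qed.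

Lemma tail_face_perm rho d : is_rotation rho -> tail (face_perm rho d) = head d.
Proof. by case=> tail_rho _; rewrite /face_perm tail_rho tail_drev. Qed.

Lemma face_perm_neq rho d : is_rotation rho -> face_perm rho d != d.
Proof.
move=> rho_rot; apply/eqP => fd_d; have := adj_dart d.
by rewrite -(tail_face_perm d rho_rot) fd_d adj_irrefl.
Qed.

Lemma nfaces_triangular rho : triangular rho -> nfaces rho * 3 = #|{: dart adj}|.
Proof.
move=> rho_tri; rewrite /nfaces (fcard_order_set (@face_perm_inj rho)) //.
by apply/subsetP => d _; rewrite inE rho_tri.
Qed.

Hypothesis adj_deg2 : forall u v, adj u v -> exists2 w, adj u w & w != v.

(* A face of length 2 would force rho to fix the reversed dart, but the
   rotation at its tail is a single cycle through at least two darts. *)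
Lemma face_order_gt2 rho d : is_rotation rho -> 2 < fingraph.order (face_perm rho) d.
Proof.
move=> rho_rot; set f := face_perm rho; rewrite ltnNge; apply/negP => order_le2.
have ffd : f (f d) = d.
  have := iter_order (@face_perm_inj rho) d; have := fingraph.order_gt0 f d.
  case: (fingraph.order f d) order_le2 => [|[|[|]]] //= _ _ fd.
  by have := face_perm_neq d rho_rot; rewrite fd eqxx.
have head_fd : head (f d) = tail d by rewrite -(tail_face_perm (f d) rho_rot) -/f ffd.
have rho_fix : rho (drev d) = drev d.
  apply: val_inj; rewrite val_drev -head_fd -(tail_face_perm d rho_rot).
  exact: surjective_pairing.
have [w adj_w w_neq] := adj_deg2 (adj_dart (drev d)).
case: rho_rot => _ /(_ (drev d) (Sub (tail (drev d), w) adj_w) erefl) /iter_findex.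
have -> : forall k, iter k rho (drev d) = drev d by elim=> //= k ->.
by move/(congr1 (@head _ adj)) => /= w_eq; rewrite w_eq eqxx in w_neq.
Qed.

Lemma nfaces_le rho : is_rotation rho -> nfaces rho * 3 <= #|{: dart adj}|.
Proof.
by move=> rho_rot; apply: fcard_mul_le (@face_perm_inj rho) _ => d; apply: face_order_gt2.
Qed.

End Faces.

Section LocalRotations.
Variables (T : finType) (adj : rel T) (rot : T -> seq T).
Hypotheses (rot_uniq : forall u, uniq (rot u)) (mem_rot : forall u v, (v \in rot u) = adj u v).
Implicit Types (d : dart adj).

Lemma adj_next_rot u v : adj u v -> adj u (next (rot u) v).
Proof. by rewrite -!mem_rot mem_next. Qed.

Definition rot_step d : dart adj :=
  Sub (tail d, next (rot (tail d)) (head d)) (adj_next_rot (adj_dart d)).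

Lemma rot_step_inj : injective rot_step.
Proof.
move=> d d' /(congr1 val) [tail_eq]; rewrite tail_eq => /(can_inj (prev_next (rot_uniq _))).
exact: dart_eq.
Qed.

Definition rot_perm : {perm dart adj} := perm rot_step_inj.

Lemma val_iter_rot_perm n d :
  val (iter n rot_perm d) = (tail d, iter n (next (rot (tail d))) (head d)).
Proof.
elim: n => [|n IHn] /=; first exact: surjective_pairing.
by rewrite permE /= /tail /head IHn.
Qed.

Lemma rot_perm_rotation : is_rotation rot_perm.
Proof.
split=> [d | d d' tail_eq]; first by rewrite permE.
have: fconnect (next (rot (tail d))) (head d) (head d').
  have head_in : head d \in rot (tail d) by rewrite mem_rot adj_dart.
  by rewrite (fconnect_cycle (cycle_next (rot_uniq _)) head_in) mem_rot tail_eq adj_dart.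
move/iter_findex; set n := findex _ _ _ => iter_eq.
have <- : iter n rot_perm d = d'.
  by apply: val_inj; rewrite val_iter_rot_perm iter_eq tail_eq -surjective_pairing.
exact: fconnect_iter.
Qed.

Lemma card_dart_rot : #|{: dart adj}| = \sum_u size (rot u).
Proof.
rewrite card_sig -sum1_card; transitivity (\sum_u \sum_(v | adj u v) 1).
  by rewrite pair_big_dep; apply: eq_bigl => -[u v].
apply: eq_bigr => u _; rewrite -(card_uniqP (rot_uniq u)) -sum1_card.
by apply: eq_bigl => v; rewrite mem_rot.
Qed.

Hypotheses (adj_sym : symmetric adj) (adj_irrefl : irreflexive adj).
Hypothesis rot_triangle : forall u v, adj u v -> next (rot (next (rot v) u)) v = u.

Local Notation face := (face_perm rot_perm).

Lemma tail_face_rot_perm d : tail (face d) = head d.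
Proof. exact (tail_face_perm adj_sym d rot_perm_rotation). Qed.

Lemma head_face_rot_perm d : head (face d) = next (rot (head d)) (tail d).
Proof. by rewrite /face_perm permE /head /= -/(head _) head_drev ?tail_drev. Qed.

Lemma rot_perm_triangular : triangular rot_perm.
Proof.
move=> d; have face_neq e : face e != e :=
  face_perm_neq adj_sym adj_irrefl e rot_perm_rotation.
have head_face2 : head (face (face d)) = tail d.
  by rewrite !head_face_rot_perm tail_face_rot_perm rot_triangle ?adj_dart.
have face3 : face (face (face d)) = d.
  apply: dart_eq; first by rewrite tail_face_rot_perm head_face2.
  rewrite head_face_rot_perm head_face2 tail_face_rot_perm.
  have := rot_triangle (adj_dart (face d)).
  by rewrite -head_face_rot_perm head_face2 tail_face_rot_perm.
apply: (@order_cycle _ face [:: d; face d; face (face d)]); last exact: mem_head.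
  by rewrite /= face3 !eqxx.
rewrite /= !inE !negb_or andbT -andbA.
apply/and3P; split; rewrite eq_sym; try exact: face_neq.
by apply: contraNneq (face_neq d) => face2_d; apply/eqP; rewrite -{2}face3 face2_d.
Qed.

End LocalRotations.

Lemma all_iota_ord n (P : pred nat) : all P (iota 0 n) -> forall i : 'I_n, P i.
Proof. by move/allP => allP_n i; apply: allP_n; rewrite mem_iota add0n ltn_ord. Qed.

(* The finite checks are stated over [nat]: [vm_compute] cannot evaluate
   through the opaque bound proofs carried by ordinals. *)
Definition adjn (u v : nat) : bool := (u != v) && ~~ [&& u < 12, v < 12 & u./2 == v./2].

Lemma K15m6K2E (u v : 'I_15) : K15m6K2 u v = adjn u v.
Proof. by []. Qed.

Lemma K15m6K2_sym : symmetric K15m6K2.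
Proof.
move=> u v; rewrite !K15m6K2E /adjn eq_sym andbCA.
by congr (_ && ~~ (_ && (_ && _))); apply: eq_sym.
Qed.

Lemma K15m6K2_irrefl : irreflexive K15m6K2.
Proof. by move=> u; rewrite K15m6K2E /adjn eqxx. Qed.

(* Row [u] lists the neighbours of vertex [u] in their cyclic order around [u]. *)
Definition rotation_table : seq (seq nat) := [::
  [:: 2; 5; 9; 3; 14; 13; 4; 6; 11; 7; 10; 8; 12];
  [:: 2; 6; 13; 8; 10; 9; 7; 3; 4; 14; 11; 12; 5];
  [:: 0; 12; 13; 7; 9; 11; 4; 10; 14; 8; 6; 1; 5];
  [:: 0; 9; 12; 11; 13; 6; 10; 4; 1; 7; 8; 5; 14];
  [:: 0; 13; 9; 14; 1; 3; 10; 2; 11; 8; 7; 12; 6];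
  [:: 0; 2; 1; 12; 7; 11; 14; 3; 8; 13; 10; 6; 9];
  [:: 0; 4; 12; 14; 9; 5; 10; 3; 13; 1; 2; 8; 11];
  [:: 0; 11; 5; 12; 4; 8; 3; 1; 9; 2; 13; 14; 10];
  [:: 0; 10; 1; 13; 5; 3; 7; 4; 11; 6; 2; 14; 12];
  [:: 0; 5; 6; 14; 4; 13; 11; 2; 7; 1; 10; 12; 3];
  [:: 0; 7; 14; 2; 4; 3; 6; 5; 13; 12; 9; 1; 8];
  [:: 0; 6; 8; 4; 2; 9; 13; 3; 12; 1; 14; 5; 7];
  [:: 0; 8; 14; 6; 4; 7; 5; 1; 11; 3; 9; 10; 13; 2];
  [:: 0; 14; 7; 2; 12; 10; 5; 8; 1; 6; 3; 11; 9; 4];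
  [:: 0; 3; 5; 11; 1; 4; 9; 6; 12; 8; 2; 10; 7; 13]].

Definition rotn (u : nat) : seq nat := nth [::] rotation_table u.

Lemma rotn_perm_adj :
  all (fun u => perm_eq (rotn u) [seq v <- iota 0 15 | adjn u v]) (iota 0 15).
Proof. by vm_compute. Qed.

Lemma rotn_triangle :
  all (fun u => all (fun v =>
    adjn u v ==> (next (rotn (next (rotn v) u)) v == u)) (iota 0 15)) (iota 0 15).
Proof. by vm_compute. Qed.

Lemma rotn_next_neq :
  all (fun u => all (fun v => adjn u v ==> (next (rotn u) v != v)) (iota 0 15)) (iota 0 15).
Proof. by vm_compute. Qed.

Lemma sum_size_rotn : \sum_(u < 15) size (rotn u) = 198.
Proof. by rewrite -(big_mkord xpredT (fun u => size (rotn u))) unlock. Qed.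

Definition rotK (u : 'I_15) : seq 'I_15 := map inord (rotn u).

Lemma map_val_rotK u : map val (rotK u) = rotn u.
Proof.
rewrite -map_comp map_id_in // => v; rewrite (perm_mem (all_iota_ord rotn_perm_adj u)).
by rewrite mem_filter mem_iota => /andP[_ /= v_lt]; rewrite inordK.
Qed.

Lemma rotK_uniq u : uniq (rotK u).
Proof.
rewrite -(map_inj_uniq val_inj) map_val_rotK (perm_uniq (all_iota_ord rotn_perm_adj u)).
by rewrite filter_uniq ?iota_uniq.
Qed.

Lemma mem_rotK u v : (v \in rotK u) = K15m6K2 u v.
Proof.
rewrite -(mem_map val_inj) map_val_rotK (perm_mem (all_iota_ord rotn_perm_adj u)).
by rewrite mem_filter mem_iota /= ltn_ord andbT.
Qed.

Lemma val_next_rotK u v : val (next (rotK u) v) = next (rotn u) (val v).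
Proof. by rewrite -map_val_rotK (next_map val_inj) ?rotK_uniq. Qed.

Lemma rotK_triangle u v : K15m6K2 u v -> next (rotK (next (rotK v) u)) v = u.
Proof.
move=> adj_uv; apply: val_inj; rewrite !val_next_rotK.
by have /implyP/(_ adj_uv)/eqP := all_iota_ord (all_iota_ord rotn_triangle u) v.
Qed.

Lemma K15m6K2_deg2 u v : K15m6K2 u v -> exists2 w, K15m6K2 u w & w != v.
Proof.
move=> adj_uv; exists (next (rotK u) v); first by rewrite -mem_rotK mem_next mem_rotK.
rewrite -val_eqE val_next_rotK.
by have /implyP/(_ adj_uv) := all_iota_ord (all_iota_ord rotn_next_neq u) v.
Qed.

Lemma card_dart_K15m6K2 : #|{: dart K15m6K2}| = 198.
Proof.
rewrite (card_dart_rot rotK_uniq mem_rotK) -sum_size_rotn.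
by apply: eq_bigr => u _; rewrite -map_val_rotK size_map.
Qed.

Theorem mainTheorem5 :
  (exists rho : {perm dart K15m6K2},
      is_rotation rho /\ triangular rho) /\
  orientable_genus_is K15m6K2 10.
Proof.
pose rho := rot_perm rotK_uniq mem_rotK.
have rho_rot : is_rotation rho := rot_perm_rotation rotK_uniq mem_rotK.
have rho_tri : triangular rho :=
  rot_perm_triangular rotK_uniq mem_rotK K15m6K2_sym K15m6K2_irrefl rotK_triangle.
have nfaces_rho := nfaces_triangular K15m6K2_sym rho_tri.
split; first by exists rho.
rewrite /orientable_genus_is /emb_genus /nedges card_ord card_dart_K15m6K2 in nfaces_rho *.
split; first by exists rho; split=> //; lia.
move=> rho' /(nfaces_le K15m6K2_sym K15m6K2_irrefl K15m6K2_deg2).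
rewrite card_dart_K15m6K2; lia.
Qed.
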